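(* Let $m,n\in\mathbb{N}$ with $m\ge 1$. If $m$ and $n$ are both even, $m\mid 3n$, and $4\nmid n$, then the friendship graph $F_n$ is not $\mathbb{Z}_m$-cordial.
   Context: Graphs are finite, simple and undirected. For $n\in\mathbb{N}$, the friendship graph $F_n$ is the union of $n$ copies of the triangle $C_3$ joined at a single common (central) vertex. For an abelian group $A$ and a graph $G=(V,E)$, a vertex labeling $\ell:V\to A$ induces an edge labeling $\ell(\{v_1,v_2\})=\ell(v_1)+\ell(v_2)$. Let $f_V(a)=|\{v\in V:\ell(v)=a\}|$ and $f_E(a)=|\{e\in E:\ell(e)=a\}|$. The labeling is $A$-cordial if $|f_V(a_1)-f_V(a_2)|\le 1$ and $|f_E(a_1)-f_E(a_2)|\le 1$ for all $a_1,a_2\in A$; $G$ is $A$-cordial if it admits an $A$-cordial labeling. *)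

From mathcomp Require Import all_boot all_order.
Set Implicit Arguments. Unset Strict Implicit. Unset Printing Implicit Defensive.

(* A finite simple graph on vertex set 'I_N given by a symmetric irreflexive
   relation; each edge {u,v} is counted once as the pair (u,v) with u < v. *)
Definition simple_graph N (adj : rel 'I_N) : Prop :=
  irreflexive adj /\ symmetric adj.

(* The abelian group Z_m is represented by residues 'I_m with addition mod m.
   A vertex labeling is l : 'I_N -> 'I_m. *)
Definition fV N m (l : 'I_N -> 'I_m) (a : 'I_m) : nat :=
  #|[set v : 'I_N | l v == a]|.

Definition fE N m (adj : rel 'I_N) (l : 'I_N -> 'I_m) (a : 'I_m) : nat :=
  #|[set p : 'I_N * 'I_N | [&& adj p.1 p.2, (p.1 < p.2)%N &
                             ((l p.1 + l p.2) %% m == a)%N]]|.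

Definition Zm_cordial_labeling N m (adj : rel 'I_N) (l : 'I_N -> 'I_m) : Prop :=
  (forall a1 a2 : 'I_m, (fV l a1 <= (fV l a2).+1)%N) /\
  (forall a1 a2 : 'I_m, (fE adj l a1 <= (fE adj l a2).+1)%N).

Definition Zm_cordial (N m : nat) (adj : rel 'I_N) : Prop :=
  exists l : 'I_N -> 'I_m, Zm_cordial_labeling adj l.

(* Friendship graph F_n on vertices 0..2n: vertex 0 is the centre and, for
   i < n, the triangle i is {0, 2i+1, 2i+2}. *)
Definition friendship_adj n : rel 'I_(2 * n + 1) :=
  fun u v =>
    (u != v) &&
    [|| (u == 0 :> nat) && (v != 0 :> nat),
        (v == 0 :> nat) && (u != 0 :> nat)
      | (u != 0 :> nat) && (v != 0 :> nat) && ((u.-1)./2 == (v.-1)./2)].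
Arguments Zm_cordial : clear implicits.
Arguments friendship_adj : clear implicits.

(* Since m is even, the parity of an edge label (l u + l v) mod m is the parity of l u + l v,
   so the three edges of each triangle of F_n carry an even number of odd labels and hence
   F_n has an even number of odd-labelled edges. On the other hand, m | 3n forces a
   Z_m-cordial labeling to use every label exactly c = 3n/m times, so there are
   (m/2) c = 3 (n/2) odd-labelled edges, an odd number when 4 does not divide n. *)
From mathcomp Require Import all_boot all_order zify.

Set Implicit Arguments.
Unset Strict Implicit.
Unset Printing Implicit Defensive.

Section BigNatDouble.
Variables (R : Type) (idx : R) (op : Monoid.law idx).

Lemma big_nat_double k (F : nat -> R) :
  \big[op/idx]_(0 <= j < k.*2) F j = \big[op/idx]_(0 <= i < k) op (F i.*2) (F i.*2.+1).
Proof.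
elim: k => [|k IHk]; first by rewrite !big_geq.
by rewrite doubleS !big_nat_recr //= IHk Monoid.mulmA.
Qed.

End BigNatDouble.

Lemma sum_odd_ord m : \sum_(a < m) odd a = m./2.
Proof. by elim: m => [|m IHm]; rewrite ?big_ord0 // big_ord_recr /= IHm uphalf_half addnC. Qed.

Lemma sum_mul_card_fibers (T : finType) (P : pred T) m (f : T -> nat) (F : nat -> nat) :
  (forall x, f x < m) ->
  \sum_(a < m) F a * #|[set x | P x && (f x == a)]| = \sum_(x | P x) F (f x).
Proof.
move=> f_lt; rewrite (partition_big (fun x => Ordinal (f_lt x)) xpredT) //=.
apply: eq_bigr => a _; rewrite mulnC -sum1_card big_distrl /=.
apply: eq_big => x; first by rewrite inE -(inj_eq val_inj).
by rewrite inE => /andP[_ /eqP ->]; rewrite mul1n.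
Qed.

Lemma balanced_dvd_sum_constant (I : finType) (F : I -> nat) :
  (forall i j, F i <= (F j).+1) -> #|I| %| \sum_i F i -> exists c, forall i, F i = c.
Proof.
move=> F_bal dvd_sum.
case: (posnP #|I|) => [/card0_eq I0 | /card_gt0P[i0 _]].
  by exists 0 => i; have := I0 i; rewrite inE.
case: (arg_minnP F (isT : xpredT i0)) => i1 _ F_min.
pose D := \sum_i (F i - F i1).
have sumE : \sum_i F i = #|I| * F i1 + D.
  rewrite -sum_nat_const -big_split /=; apply: eq_bigr => i _.
  by have := F_min i isT; lia.
(* The minimum i1 contributes nothing to D and every other term is at most 1. *)
have D_lt : D < #|I|.
  rewrite -sum1_card [in X in _ < X](bigD1 i1) //= /D (bigD1 i1) //= subnn add0n add1n ltnS.
  by apply: leq_sum => i _; have := F_bal i i1; lia.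
have : D == 0.
  rewrite -(modn_small D_lt); change (#|I| %| D).
  by rewrite -(dvdn_addr _ (dvdn_mulr (F i1) (dvdnn #|I|))) -sumE.
rewrite sum_nat_eq0 => /forallP D0.
by exists (F i1) => i; have := D0 i; have := F_min i isT; lia.
Qed.

Lemma triangle_odd_labels_even m x y z :
  ~~ odd m -> ~~ odd (odd ((x + y) %% m) + odd ((x + z) %% m) + odd ((y + z) %% m)).
Proof. by move=> /negbTE m_even; rewrite !odd_mod //; lia. Qed.

Lemma friendship_edgeE n (u v : 'I_(2 * n + 1)) :
  friendship_adj n u v && (u < v) = (u == 0 :> nat) && (0 < v) || odd u && (v == u.+1 :> nat).
Proof.
rewrite /friendship_adj -!(inj_eq val_inj) /=.
by case: u v => [u u_lt] [v v_lt] /=; rewrite -!divn2; lia.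
Qed.

Lemma sum_friendship_pairs n (h : nat -> nat -> nat) :
  \sum_(0 <= u < 2 * n + 1)
     \sum_(0 <= v < 2 * n + 1 | (u == 0) && (0 < v) || odd u && (v == u.+1)) h u v
  = \sum_(0 <= i < n) (h 0 i.*2.+1 + h 0 i.*2.+2 + h i.*2.+1 i.*2.+2).
Proof.
rewrite mul2n addn1 big_ltn // big_add1 /=.
have -> : \sum_(0 <= v < n.*2.+1 | true && (0 < v) || false) h 0 v
          = \sum_(0 <= i < n) (h 0 i.*2.+1 + h 0 i.*2.+2).
  by rewrite big_ltn_cond // big_add1 /= big_nat_double.
under [X in _ + X]eq_bigr => u _ do rewrite (big_nat1_cond_eq _ _ (fun=> ~~ odd u)).
rewrite big_nat_double -big_split /=; apply: eq_big_nat => i /andP[_ i_lt].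
by rewrite odd_double /= andbT andbF addn0 ifT //; lia.
Qed.

Lemma sum_friendship_edges n (h : nat -> nat -> nat) :
  \sum_(p : 'I_(2 * n + 1) * 'I_(2 * n + 1) | friendship_adj n p.1 p.2 && (p.1 < p.2))
     h p.1 p.2
  = \sum_(0 <= i < n) (h 0 i.*2.+1 + h 0 i.*2.+2 + h i.*2.+1 i.*2.+2).
Proof.
rewrite -sum_friendship_pairs.
transitivity (\sum_(u < 2 * n + 1)
                \sum_(v < 2 * n + 1 | friendship_adj n u v && (u < v)) h u v).
  by rewrite pair_big_dep.
rewrite big_mkord; apply: eq_bigr => u _; rewrite big_mkord.
by apply: eq_bigl => v; rewrite friendship_edgeE.
Qed.

(* The vertices of F_n are addressed by nat expressions such as [i.*2.+1], hence this extension
   of a labeling to nat. *)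
Definition nat_label N m (l : 'I_N -> 'I_m) (x : nat) : nat :=
  if insub x is Some u then val (l u) else 0.

Definition edge_label N m (l : 'I_N -> 'I_m) (x y : nat) : nat :=
  (nat_label l x + nat_label l y) %% m.

Lemma nat_labelE N m (l : 'I_N -> 'I_m) (u : 'I_N) : nat_label l u = l u.
Proof. by rewrite /nat_label valK. Qed.

Lemma sum_mul_fE_friendship n m (l : 'I_(2 * n + 1) -> 'I_m) (F : nat -> nat) :
  0 < m ->
  \sum_(a < m) F a * fE (friendship_adj n) l a
  = \sum_(0 <= i < n) (F (edge_label l 0 i.*2.+1) + F (edge_label l 0 i.*2.+2)
                        + F (edge_label l i.*2.+1 i.*2.+2)).
Proof.
move=> m_gt0.
have lab_lt (p : 'I_(2 * n + 1) * 'I_(2 * n + 1)) : edge_label l p.1 p.2 < m.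
  by rewrite ltn_pmod.
rewrite -(sum_friendship_edges n (fun x y => F (edge_label l x y))).
rewrite -(sum_mul_card_fibers _ F lab_lt); apply: eq_bigr => a _; congr (_ * _).
by apply: eq_card => p; rewrite !inE /edge_label !nat_labelE andbA.
Qed.

Theorem theorem7p1 (m n : nat) :
  (1 <= m)%N -> ~~ odd m -> ~~ odd n -> (m %| 3 * n)%N -> ~~ (4 %| n)%N ->
  ~ Zm_cordial (2 * n + 1) m (friendship_adj n).
Proof.
move=> m_gt0 m_even n_even m_dvd n_not4 [l [_ fE_bal]].
have fE_sum : \sum_(a < m) fE (friendship_adj n) l a = 3 * n.
  under eq_bigr do rewrite -[fE _ _ _]mul1n.
  by rewrite (sum_mul_fE_friendship l (fun=> 1)) // sum_nat_const_nat subn0 mulnC.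
have [c fE_c] : exists c, forall a, fE (friendship_adj n) l a = c.
  by apply: balanced_dvd_sum_constant fE_bal _; rewrite card_ord fE_sum.
have m_c : m * c = 3 * n.
  by rewrite -fE_sum (eq_bigr _ (fun a _ => fE_c a)) sum_nat_const card_ord.
have odd_edges_even : ~~ odd (\sum_(a < m) odd a * fE (friendship_adj n) l a).
  rewrite (sum_mul_fE_friendship l (fun a => odd a)) //.
  apply: (big_ind (fun k => ~~ odd k)) => // [x y|i _]; last exact: triangle_odd_labels_even.
  by rewrite oddD => /negbTE-> /negbTE->.
have odd_edgesE : \sum_(a < m) odd a * fE (friendship_adj n) l a = m./2 * c.
  by under eq_bigr do rewrite fE_c; rewrite -big_distrl sum_odd_ord.
by move: odd_edges_even; rewrite odd_edgesE; nia.
Qed.
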